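(* Let $B_{z,z'}:\Lambda\to\Lambda$ be the linear operator defined on the basis of Schur functions by $$B_{z,z'}s_\mu=-|\mu|(|\mu|-1+zz')s_\mu+p_1\sum_{\mu_\bullet\nearrow\mu}(z)_{\mu/\mu_\bullet}(z')_{\mu/\mu_\bullet}s_{\mu_\bullet}.$$ Then $B_{z,z'}$ preserves the principal ideal of $\Lambda$ generated by $p_1-1$, and the induced operator on $\Lambda^\circ=\Lambda/(p_1-1)$ is given by $s^\circ_\mu\mapsto-m(m-1+zz')s^\circ_\mu+\sum_{\mu_\bullet\nearrow\mu}(z)_{\mu/\mu_\bullet}(z')_{\mu/\mu_\bullet}s^\circ_{\mu_\bullet}$, $m=|\mu|$.
   Context: $\Lambda=\mathbb R[p_1,p_2,\dots]$ is the algebra of symmetric functions over $\mathbb R$ with power sums $p_k$ and Schur functions $s_\mu$ indexed by Young diagrams $\mu$ (including $\varnothing$); $\Lambda^\circ=\Lambda/(p_1-1)$ and $f^\circ$ denotes the image of $f$. $\mu_\bullet\nearrow\mu$ means $\mu_\bullet\subset\mu$ with $|\mu|=|\mu_\bullet|+1$; $(z)_\theta=\prod_{(i,j)\in\theta}(z+j-i)$ for a skew diagram $\theta$ ($(i,j)$ = row $i$, column $j$). $(z,z')$ is fixed in the principal series ($z\notin\mathbb R$, $z'=\bar z$) or complementary series ($z,z'\in(N,N+1)$, $N\in\mathbb Z$), so the coefficients are real. *)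

From HB Require Import structures.
From mathcomp Require Import all_boot all_order all_algebra.
From mathcomp Require Export complex.
Set Implicit Arguments. Unset Strict Implicit. Unset Printing Implicit Defensive.
Import Order.TTheory GRing.Theory Num.Theory.
Local Open Scope ring_scope.

(* A Young diagram = a partition: a non-increasing list of positive naturals
   (row lengths, rows numbered from 1). The empty diagram is [::]. *)
Definition is_part (s : seq nat) : bool :=
  sorted (fun a b => (b <= a)%N) s && all (fun a => (0 < a)%N) s.

Definition psize (s : seq nat) : nat := sumn s.

Definition subdiag (m n : seq nat) : bool :=
  all (fun i => (nth 0 m i <= nth 0 n i)%N) (iota 0 (size m)).

Definition covers (m n : seq nat) : bool :=
  [&& is_part m, is_part n, subdiag m n & psize n == (psize m).+1]%N.

(* candidate lists (supersets of the true neighbour sets; the sums below are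
   filtered by [covers], so only the genuine neighbours contribute) *)
Definition rm_cands (n : seq nat) : seq (seq nat) :=
  undup [seq filter (fun a => (0 < a)%N) (set_nth 0 n i (nth 0 n i).-1)
        | i <- iota 0 (size n)].
Definition add_cands (m : seq nat) : seq (seq nat) :=
  undup [seq set_nth 0 m i (nth 0 m i).+1 | i <- iota 0 (size m).+1].

(* cells (i,j) (row i, column j, 1-indexed) of the skew diagram n/m *)
Definition skew_cells (n m : seq nat) : seq (nat * nat) :=
  flatten [seq [seq (i.+1, j.+1) | j <- iota (nth 0 m i) (nth 0 n i - nth 0 m i)]
          | i <- iota 0 (size n)].

Definition poch (R : rcfType) (z : R[i]) (n m : seq nat) : R[i] :=
  \prod_(c <- skew_cells n m) (z + (c.2)%:R - (c.1)%:R).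

(* An element of Lambda (over R) is encoded by its coefficient function
   f : seq nat -> R, f mu = coefficient of s_mu; it must vanish off Young
   diagrams and have finite support. *)
Definition inLam (R : rcfType) (f : seq nat -> R) : Prop :=
  (forall s, ~~ is_part s -> f s = 0) /\
  exists S : seq (seq nat), forall s, f s != 0 -> s \in S.

Definition schur (R : rcfType) (mu : seq nat) : seq nat -> R :=
  fun nu => (nu == mu)%:R.

(* multiplication by p_1 = s_(1), via the Pieri rule p_1 s_mu = sum_{mu ↗ nu} s_nu,
   written coefficientwise *)
Definition p1mul (R : rcfType) (f : seq nat -> R) : seq nat -> R :=
  fun nu => \sum_(m <- rm_cands nu | covers m nu) f m.

Definition p1m1 (R : rcfType) (f : seq nat -> R) : seq nat -> R :=
  fun nu => p1mul f nu - f nu.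

Definition inIdeal (R : rcfType) (f : seq nat -> R) : Prop :=
  exists h, inLam h /\ forall nu, f nu = p1m1 h nu.

(* coefficient (z)_{mu/mub} (z')_{mu/mub}  (real under the standing hypotheses) *)
Definition Bcoef (R : rcfType) (z z' : R[i]) (mu mub : seq nat) : R :=
  complex.Re (poch z mu mub * poch z' mu mub).

(* B_{z,z'} on Lambda, i.e. the linear extension of
   s_mu |-> -|mu|(|mu|-1+zz') s_mu + p_1 sum_{mub ↗ mu} Bcoef mu mub s_mub,
   written coefficientwise. *)
Definition Bop (R : rcfType) (z z' : R[i]) (f : seq nat -> R) : seq nat -> R :=
  let g := fun mub => \sum_(m <- add_cands mub | covers mub m) Bcoef z z' m mub * f m in
  fun nu => - (psize nu)%:R * ((psize nu)%:R - 1 + complex.Re (z * z')) * f nu + p1mul g nu.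

(* the claimed image of s°_mu in Lambda° (lifted to Lambda):
   -m(m-1+zz') s_mu + sum_{mub ↗ mu} Bcoef mu mub s_mub *)
Definition Bcirc_image (R : rcfType) (z z' : R[i]) (mu : seq nat) : seq nat -> R :=
  fun nu => - (psize mu)%:R * ((psize mu)%:R - 1 + complex.Re (z * z')) * schur R mu nu
            + \sum_(m <- rm_cands mu | covers m mu) Bcoef z z' mu m * schur R m nu.

Definition admissible (R : rcfType) (z z' : R[i]) : Prop :=
  (complex.Im z != 0 /\ z' = conjc z) \/
  (exists N : int, complex.Im z = 0 /\ complex.Im z' = 0 /\
     N%:~R < complex.Re z < (N + 1)%:~R /\ N%:~R < complex.Re z' < (N + 1)%:~R).

From mathcomp Require Import all_boot all_order all_algebra.
From mathcomp Require Import ring zify.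
Import GRing.Theory Num.Theory.
Set Implicit Arguments. Unset Strict Implicit.

(* Write [Bop] as B = p_1 D - E, where E is diagonal with eigenvalue
   n(n-1+zz') in degree n and D removes one box, a box of content c being
   weighted by Re((z+c)(z'+c)).  Adding box i and then removing box j <> i
   gives the same diagram, with the same weight, as removing j and then adding
   i; hence D p_1 - p_1 D is diagonal, and its eigenvalue on s_mu (weights of
   the addable corners minus weights of the removable corners) telescopes to
   2|mu| + zz'.  As E(n+1) - E(n) = 2n + zz', this yields
   B (p_1 - 1) = (p_1 - 1) B, and B s_mu minus the claimed image of s_mu is
   (p_1 - 1) D s_mu. *)

Local Notation "s ## k" := (nth 0%N s k) (at level 8).

Ltac case_eqs := repeat (case: eqP;
  [ let e := fresh "e" in move=> e; repeat move/succn_inj: e => e; try subst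
  | move=> ?]).

Section Partitions.
Implicit Types (s t m n : seq nat) (i j k : nat).

Lemma is_partP s :
  reflect ((forall k, (k.+1 < size s)%N -> (s ## k.+1 <= s ## k)%N) /\
           (forall k, (k < size s)%N -> (0 < s ## k)%N)) (is_part s).
Proof.
apply: (iffP andP) => [[/(sortedP 0%N) ? /(all_nthP 0%N) ?] | [? ?]] //.
by split; [apply/(sortedP 0%N) | apply/(all_nthP 0%N)].
Qed.

Lemma part_gt0 s k : is_part s -> (0 < s ## k)%N = (k < size s)%N.
Proof.
case/is_partP=> _ pos; case: (ltnP k (size s)) => hk; first by rewrite pos.
by rewrite nth_default.
Qed.

Lemma part_nthS_le s k : is_part s -> (s ## k.+1 <= s ## k)%N.
Proof.
case/is_partP=> desc _; case: (ltnP k.+1 (size s)) => hk; first exact: desc.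
by rewrite (nth_default _ hk).
Qed.

Lemma part_inj s t : is_part s -> is_part t ->
  (forall k, s ## k = t ## k) -> s = t.
Proof.
move=> ps pt st.
have size_le u v : is_part u -> is_part v -> (forall k, u ## k = v ## k) ->
    (size u <= size v)%N.
  move=> pu pv uv; case: (posnP (size u)) => [->//|hu].
  by rewrite -(prednK hu) -(part_gt0 _ pv) -uv part_gt0 // prednK.
apply: (eq_from_nth (x0 := 0%N)) => [|i _]; last exact: st.
by apply/eqP; rewrite eqn_leq !size_le.
Qed.

(* Rows are numbered from 0, so the box added in row [i] of [s] sits in row
   [i+1], column [s ## i + 1] of the paper and has content [s ## i - i]. *)
Definition add_box s i := set_nth 0%N s i (s ## i).+1.
Definition remove_box s j :=
  filter (fun a => 0 < a)%N (set_nth 0%N s j (s ## j).-1).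
Definition addable s i := (i == 0)%N || (s ## i < s ## i.-1)%N.
Definition removable s j := (s ## j.+1 < s ## j)%N.

Lemma add_box_nth s i k : (add_box s i) ## k = (s ## k + (k == i))%N.
Proof. by rewrite /add_box nth_set_nth /=; case: eqP => [->|]; lia. Qed.

Lemma size_add_box s i : size (add_box s i) = maxn i.+1 (size s).
Proof. exact: size_set_nth. Qed.

Lemma add_box_inj s : injective (add_box s).
Proof.
move=> i i' /(congr1 (nth 0%N ^~ i)); rewrite !add_box_nth eqxx.
by case: eqP => //; lia.
Qed.

Lemma filter_gt0_nth s k : (forall k, (s ## k.+1 <= s ## k)%N) ->
  (filter (fun a => 0 < a)%N s) ## k = s ## k.
Proof.
elim: s k => [|a s IH] k desc //=.
have desc' k' : (s ## k'.+1 <= s ## k')%N by exact: (desc k'.+1).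
case: (posnP a) => [a0|a_gt0]; last by case: k => [|k] //=; exact: IH.
have s0 k' : s ## k' = 0%N.
  elim: k' => [|k' IHk]; first by have := desc 0%N; rewrite a0 /=; lia.
  by have := desc' k'; rewrite IHk; lia.
by rewrite a0 /= IH // s0; case: k => [|k] //=; rewrite s0.
Qed.

Lemma filter_gt0_part s : (forall k, (s ## k.+1 <= s ## k)%N) ->
  is_part (filter (fun a => 0 < a)%N s).
Proof.
move=> desc; apply/andP; split.
  apply: sorted_filter; first by move=> a b c; lia.
  by apply/(sortedP 0%N) => i _; exact: desc.
by apply/allP => x; rewrite mem_filter => /andP[].
Qed.

Lemma decr_nthS_le s j : is_part s -> removable s j ->
  forall k, ((set_nth 0%N s j (s ## j).-1) ## k.+1
             <= (set_nth 0%N s j (s ## j).-1) ## k)%N.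
Proof.
move=> ps hj k; rewrite !nth_set_nth /=.
have := part_nthS_le k ps; have := part_nthS_le k.+1 ps; move: hj.
by rewrite /removable; case: eqP => e1; case: eqP => e2; subst; lia.
Qed.

Lemma remove_box_nth s j k : is_part s -> removable s j ->
  (remove_box s j) ## k = (s ## k - (k == j))%N.
Proof.
move=> ps hj; rewrite /remove_box filter_gt0_nth; last exact: decr_nthS_le.
by rewrite nth_set_nth /=; case: eqP => [->|]; lia.
Qed.

Lemma remove_box_part s j : is_part s -> removable s j -> is_part (remove_box s j).
Proof. by move=> ps hj; apply/filter_gt0_part/decr_nthS_le. Qed.

Lemma addable_size s i : is_part s -> addable s i -> (i <= size s)%N.
Proof.
by rewrite /addable => ps; case: i => [//|i] /= hi; rewrite -(part_gt0 _ ps); lia.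
Qed.

Lemma removable_size s j : is_part s -> removable s j -> (j < size s)%N.
Proof. by move=> ps hj; rewrite -(part_gt0 _ ps); move: hj; rewrite /removable; lia. Qed.

Lemma size_remove_box s j : (j < size s)%N -> (size (remove_box s j) <= size s)%N.
Proof.
move=> hj; rewrite /remove_box size_filter (leq_trans (count_size _ _)) //.
by rewrite size_set_nth; lia.
Qed.

Lemma add_box_part s i : is_part s -> addable s i -> is_part (add_box s i).
Proof.
move=> ps hi; have hsz := addable_size ps hi.
apply/is_partP; split=> k hk.
- rewrite !add_box_nth; have := part_nthS_le k ps; move: hi; rewrite /addable.
  by case: (k =P i) => [->|]; case: (k.+1 =P i) => [<-|] /=; lia.
- rewrite add_box_nth; move: hk; rewrite size_add_box => hk.
  case: (k =P i) => [->|ne]; first lia.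
  by rewrite addn0 part_gt0 //; lia.
Qed.

Lemma sumn_nth s N : (size s <= N)%N -> sumn s = (\sum_(k < N) s ## k)%N.
Proof.
elim: s N => [|a s IH] N /=; first by move=> _; rewrite big1 // => k; rewrite nth_nil.
by case: N => [//|N] hN; rewrite big_ord_recl /= (IH N).
Qed.

Lemma sum_ord_eqn N i : (\sum_(k < N) ((k : nat) == i : nat) = (i < N))%N.
Proof.
elim: N => [|N IH]; first by rewrite big_ord0.
by rewrite big_ord_recr /= IH; case: (ltngtP i N); lia.
Qed.

Lemma covers_single_box m n : is_part m -> is_part n ->
  covers m n <-> exists i, forall k, n ## k = (m ## k + (k == i))%N.
Proof.
move=> pm pn; split; last first.
  case=> i mn; apply/and4P; split => //; first by apply/allP => k _; rewrite mn; lia.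
  pose N := (size m + size n + i.+1)%N.
  rewrite /psize (@sumn_nth n N) ?(@sumn_nth m N); try lia.
  rewrite (eq_bigr (fun k : 'I_N => m ## k + ((k : nat) == i))%N) => [|k _]; last exact: mn.
  by rewrite big_split /= sum_ord_eqn; apply/eqP; lia.
case/and4P=> _ _ /allP sub /eqP hsz.
have le k : (m ## k <= n ## k)%N.
  case: (ltnP k (size m)) => hk; last by rewrite nth_default.
  by apply: sub; rewrite mem_iota.
pose N := (size m + size n)%N.
have diff1 : (\sum_(k < N) (n ## k - m ## k) = 1)%N.
  move: hsz; rewrite /psize (@sumn_nth n N) ?(@sumn_nth m N); try lia.
  rewrite (eq_bigr (fun k : 'I_N => m ## k + (n ## k - m ## k))%N).
    by rewrite big_split /=; lia.
  by move=> k _; have := le k; lia.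
have [i hi] : exists i : 'I_N, (n ## i - m ## i != 0)%N.
  apply/existsP; apply: contraT; rewrite negb_exists => /forallP H.
  by move: diff1; rewrite big1 // => k _; apply/eqP; rewrite -[_ == _]negbK H.
move: diff1; rewrite (bigD1 i) //=; set S := bigop _ _ _ => diff1.
have /eqP : S = 0%N by lia.
rewrite /S sum_nat_eq0 => /forallP rest.
exists i => k; case: (ltnP k N) => hk.
  have := rest (Ordinal hk); rewrite /= -(inj_eq val_inj) /=.
  by case: eqP => [->|] /=; have := le k; lia.
rewrite !nth_default; try lia.
by have := ltn_ord i; case: eqP; lia.
Qed.

Lemma covers_part m n : covers m n -> is_part m /\ is_part n.
Proof. by case/and4P. Qed.

Lemma covers_psize m n : covers m n -> psize n = (psize m).+1.
Proof. by case/and4P=> _ _ _ /eqP. Qed.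

Lemma covers_add_box s i : is_part s -> addable s i -> covers s (add_box s i).
Proof.
move=> ps hi; apply/(covers_single_box ps (add_box_part ps hi)).
by exists i => k; exact: add_box_nth.
Qed.

Lemma covers_remove_box s j : is_part s -> removable s j -> covers (remove_box s j) s.
Proof.
move=> ps hj; apply/(covers_single_box (remove_box_part ps hj) ps); exists j => k.
rewrite remove_box_nth //; case: eqP => [->|]; last lia.
by move: hj; rewrite /removable; lia.
Qed.

Lemma coversE_add m n : covers m n -> exists2 i, addable m i & n = add_box m i.
Proof.
move=> hc; have [pm pn] := covers_part hc.
have [i mn] := (covers_single_box pm pn).1 hc.
have hi : addable m i.
  rewrite /addable; case: i mn => [//|i] mn /=.
  by have := part_nthS_le i pn; rewrite !mn; repeat case: eqP => ?; lia.
exists i => //; apply: part_inj => // [|k]; first exact: add_box_part.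
by rewrite mn add_box_nth.
Qed.

Lemma coversE_remove m n : covers m n -> exists2 j, removable n j & m = remove_box n j.
Proof.
move=> hc; have [pm pn] := covers_part hc.
have [j mn] := (covers_single_box pm pn).1 hc.
have hj : removable n j.
  by rewrite /removable !mn; have := part_nthS_le j pm; repeat case: eqP => ?; lia.
exists j => //; apply: part_inj => // [|k]; first exact: remove_box_part.
by rewrite remove_box_nth // mn; lia.
Qed.

Lemma covers_add_cands m n : covers m n -> n \in add_cands m.
Proof.
move=> hc; have [i hi ->] := coversE_add hc; have [pm _] := covers_part hc.
rewrite mem_undup; apply/mapP; exists i => //.
by rewrite mem_iota; have := addable_size pm hi; lia.
Qed.

Lemma covers_rm_cands m n : covers m n -> m \in rm_cands n.
Proof.
move=> hc; have [j hj ->] := coversE_remove hc; have [_ pn] := covers_part hc.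
by rewrite mem_undup; apply/mapP; exists j; rewrite // mem_iota removable_size.
Qed.

End Partitions.

Local Open Scope ring_scope.

Section CoverSums.
Variables (R : rcfType) (G : seq nat -> R).

Lemma sum_covers_up s N : is_part s -> (size s < N)%N ->
  \sum_(m <- add_cands s | covers s m) G m = \sum_(i < N | addable s i) G (add_box s i).
Proof.
move=> ps hN; rewrite -big_filter.
rewrite (perm_big [seq add_box s i | i <- filter (addable s) (iota 0 N)]); last first.
  apply: uniq_perm; first by rewrite filter_uniq // undup_uniq.
    by rewrite (map_inj_uniq (@add_box_inj s)) filter_uniq // iota_uniq.
  move=> x; rewrite mem_filter; apply/andP/mapP => [[hc _] | [k]].
    have [i hi ->] := coversE_add hc.
    by exists i => //; rewrite mem_filter mem_iota hi /=; have := addable_size ps hi; lia.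
  rewrite mem_filter mem_iota => /andP[hk _] ->; split; first exact: covers_add_box.
  by rewrite mem_undup; apply/mapP; exists k; rewrite // mem_iota /= ltnS addable_size.
rewrite big_map big_filter.
by rewrite -(big_mkord (addable s) (fun i => G (add_box s i))) /index_iota subn0.
Qed.

Lemma sum_covers_down s N : is_part s -> (size s <= N)%N ->
  \sum_(m <- rm_cands s | covers m s) G m = \sum_(j < N | removable s j) G (remove_box s j).
Proof.
move=> ps hN; rewrite -big_filter.
rewrite (perm_big [seq remove_box s j | j <- filter (removable s) (iota 0 N)]); last first.
  apply: uniq_perm; first by rewrite filter_uniq // undup_uniq.
    rewrite map_inj_in_uniq ?filter_uniq ?iota_uniq //.
    move=> j j'; rewrite !mem_filter => /andP[hj _] /andP[hj' _].
    move/(congr1 (nth 0%N ^~ j)); rewrite !remove_box_nth // eqxx.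
    by move: hj; rewrite /removable; case: eqP => //; lia.
  move=> x; rewrite mem_filter; apply/andP/mapP => [[hc _] | [j]].
    have [j hj ->] := coversE_remove hc.
    by exists j => //; rewrite mem_filter mem_iota hj /=; have := removable_size ps hj; lia.
  rewrite mem_filter mem_iota => /andP[hj _] ->; split; first exact: covers_remove_box.
  by rewrite mem_undup; apply/mapP; exists j; rewrite // mem_iota removable_size.
rewrite big_map big_filter.
by rewrite -(big_mkord (removable s) (fun j => G (remove_box s j))) /index_iota subn0.
Qed.

End CoverSums.

Section BoxWeights.
Variables (R : rcfType) (z z' : R[i]).
Local Open Scope complex_scope.

Lemma poch_box (w : R[i]) (n m : seq nat) i : (forall k, n ## k = (m ## k + (k == i))%N) ->
  (i < size n)%N -> poch w n m = w + ((m ## i)%:R - i%:R)%:C.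
Proof.
move=> nm hi; rewrite /poch /skew_cells big_flatten /= big_map.
rewrite (bigD1_seq i) ?mem_iota ?iota_uniq //= [X in _ * X]big1_seq ?mulr1.
  rewrite nm eqxx addKn big_seq1 /= rmorphB !rmorph_nat -addrA -!natr1; congr (_ + _).
  by ring.
by move=> r /andP[/negbTE hr _]; rewrite nm hr addn0 subnn big_nil.
Qed.

Definition box_weight (c : R) : R :=
  complex.Re (z * z') + c * (complex.Re z + complex.Re z') + c ^+ 2.

Lemma Re_mul_shift (c : R) : complex.Re ((z + c%:C) * (z' + c%:C)) = box_weight c.
Proof. by rewrite /box_weight; case: z => a b; case: z' => a' b' /=; ring. Qed.

Lemma Bcoef_box (n m : seq nat) i : (forall k, n ## k = (m ## k + (k == i))%N) ->
  (i < size n)%N -> Bcoef z z' n m = box_weight ((m ## i)%:R - i%:R).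
Proof. by move=> nm hi; rewrite /Bcoef !(poch_box _ nm hi) Re_mul_shift. Qed.

Lemma Bcoef_add_box (s : seq nat) i :
  Bcoef z z' (add_box s i) s = box_weight ((s ## i)%:R - i%:R).
Proof.
by apply: Bcoef_box => [k|]; rewrite ?add_box_nth // size_add_box leq_maxl.
Qed.

Lemma Bcoef_remove_box (s : seq nat) j : is_part s -> removable s j ->
  Bcoef z z' s (remove_box s j) = box_weight ((s ## j)%:R - 1 - j%:R).
Proof.
move=> ps hj; have sj_gt0 : (0 < s ## j)%N by move: hj; rewrite /removable; lia.
rewrite (@Bcoef_box _ _ j); last exact: removable_size.
  by rewrite remove_box_nth // eqxx natrB.
by move=> k; rewrite remove_box_nth //; case: eqP => [->|]; lia.
Qed.

Definition addable_weight (s : seq nat) i :=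
  if addable s i then box_weight ((s ## i)%:R - i%:R) else 0.
Definition removable_weight (s : seq nat) i :=
  if removable s i then box_weight ((s ## i)%:R - 1 - i%:R) else 0.

Lemma sum_corner_weights_prefix (s : seq nat) M : is_part s ->
  \sum_(i < M.+1) addable_weight s i - \sum_(i < M.+1) removable_weight s i
  = box_weight ((s ## M)%:R - M%:R) + 2 * \sum_(i < M) (s ## i)%:R - M%:R ^+ 2
    + M%:R * (complex.Re z + complex.Re z')
    - (if removable s M then box_weight ((s ## M)%:R - M%:R - 1) else 0).
Proof.
move=> ps; elim: M => [|M IH].
  rewrite !big_ord_recr !big_ord0 /addable_weight /removable_weight /=.
  by case: (removable s 0); rewrite /box_weight; ring.
rewrite !(big_ord_recr M.+1) /=.
have -> (a b c d : R) : a + b - (c + d) = (a - c) + b - d by ring.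
rewrite IH big_ord_recr /= /addable_weight /removable_weight /addable /=.
rewrite /removable; case: (ltnP (s ## M.+1) (s ## M)) => h /=.
  by rewrite /box_weight -!natr1; case: ifP => _; ring.
have -> : s ## M.+1 = s ## M by have := part_nthS_le M ps; lia.
by rewrite /box_weight -!natr1; case: ifP => _; ring.
Qed.

Lemma sum_corner_weights (s : seq nat) N : is_part s -> (size s < N)%N ->
  \sum_(i < N) addable_weight s i - \sum_(i < N) removable_weight s i
  = 2 * (psize s)%:R + complex.Re (z * z').
Proof.
case: N => [//|M] ps hM; rewrite sum_corner_weights_prefix //.
have sM : s ## M = 0%N by rewrite nth_default.
have -> : removable s M = false by rewrite /removable sM.
by rewrite sM /psize (@sumn_nth s M) // natr_sum /box_weight; ring.
Qed.

End BoxWeights.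

Section SwapBoxes.
Implicit Types (s : seq nat) (i j k : nat).

Lemma addable_removableC s i j : is_part s -> i != j ->
  addable s i && removable (add_box s i) j = removable s j && addable (remove_box s j) i.
Proof.
move=> ps /eqP ne.
have d1 := part_nthS_le j ps; have d2 := part_nthS_le i ps; have d3 := part_nthS_le i.-1 ps.
case hj: (removable s j); last first.
  apply/negbTE/negP => /andP[_]; move: hj; rewrite /removable !add_box_nth.
  by move/negbT; repeat case: eqP => ?; lia.
rewrite /= /addable /removable !add_box_nth !remove_box_nth //.
move: hj; rewrite /removable; case: i ne d2 d3 => [|i] ne d2 d3 /=; first by case_eqs; lia.
by move=> hj; apply/idP/idP; case_eqs; lia.
Qed.

Lemma remove_add_boxC s i j : is_part s -> i != j ->
  addable s i -> removable (add_box s i) j ->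
  remove_box (add_box s i) j = add_box (remove_box s j) i.
Proof.
move=> ps ne hi hij.
have /andP[hj hji] : removable s j && addable (remove_box s j) i.
  by rewrite -addable_removableC // hi.
apply: part_inj.
- exact/remove_box_part/hij/add_box_part.
- exact/add_box_part/hji/remove_box_part.
- move=> k; rewrite remove_box_nth ?add_box_part // !add_box_nth remove_box_nth //.
  by move: hj ne; rewrite /removable => hj /eqP ne; case_eqs; lia.
Qed.

Lemma remove_add_box s i : is_part s -> addable s i ->
  removable (add_box s i) i /\ remove_box (add_box s i) i = s.
Proof.
move=> ps hi; have pi := add_box_part ps hi.
have hii : removable (add_box s i) i.
  by rewrite /removable !add_box_nth eqxx; have := part_nthS_le i ps; case_eqs; lia.
split => //; apply: part_inj => // [|k]; first exact: remove_box_part.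
by rewrite remove_box_nth // add_box_nth; lia.
Qed.

Lemma add_remove_box s j : is_part s -> removable s j ->
  addable (remove_box s j) j /\ add_box (remove_box s j) j = s.
Proof.
move=> ps hj; have sj_gt0 : (0 < s ## j)%N by move: hj; rewrite /removable; lia.
have hjj : addable (remove_box s j) j.
  rewrite /addable; case: j hj sj_gt0 => [//|j] hj sj_gt0 /=.
  by rewrite !remove_box_nth // eqxx; have := part_nthS_le j ps; case_eqs; lia.
split => //; apply: part_inj => // [|k]; first exact/add_box_part/hjj/remove_box_part.
by rewrite add_box_nth remove_box_nth //; case_eqs; lia.
Qed.

End SwapBoxes.

Section DownUp.
Variables (R : rcfType) (z z' : R[i]).

Definition down (f : seq nat -> R) (mub : seq nat) : R :=
  \sum_(m <- add_cands mub | covers mub m) Bcoef z z' m mub * f m.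

Definition Bdiag (n : nat) : R := n%:R * (n%:R - 1 + complex.Re (z * z')).

Lemma BopE f nu : Bop z z' f nu = p1mul (down f) nu - Bdiag (psize nu) * f nu.
Proof. by rewrite /Bop /Bdiag !mulNr addrC. Qed.

Lemma BdiagS n : Bdiag n.+1 - Bdiag n = 2 * n%:R + complex.Re (z * z').
Proof. by rewrite /Bdiag -natr1; ring. Qed.

Variable g : seq nat -> R.

Definition up_down_term s i j :=
  if addable s i && removable (add_box s i) j
  then Bcoef z z' (add_box s i) s * g (remove_box (add_box s i) j) else 0.

Definition down_up_term s i j :=
  if removable s j && addable (remove_box s j) i
  then Bcoef z z' (add_box (remove_box s j) i) (remove_box s j)
       * g (add_box (remove_box s j) i) else 0.

Lemma down_p1mul_sum s N : is_part s -> (size s < N)%N ->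
  down (p1mul g) s = \sum_(i < N) \sum_(j < N) up_down_term s i j.
Proof.
move=> ps hN; rewrite /down (sum_covers_up _ ps hN) big_mkcond.
apply: eq_bigr => i _; rewrite /up_down_term; case: ifP => hi /=; last by rewrite big1.
rewrite /p1mul (sum_covers_down _ (N := N) (add_box_part ps hi)); last first.
  by rewrite size_add_box geq_max; have := addable_size ps hi; lia.
by rewrite mulr_sumr big_mkcond; apply: eq_bigr => j _; case: ifP; rewrite ?mulr0.
Qed.

Lemma p1mul_down_sum s N : is_part s -> (size s < N)%N ->
  p1mul (down g) s = \sum_(i < N) \sum_(j < N) down_up_term s i j.
Proof.
move=> ps hN; rewrite /p1mul (sum_covers_down _ ps (ltnW hN)) big_mkcond exchange_big.
apply: eq_bigr => j _; rewrite /down_up_term; case: ifP => hj /=; last by rewrite big1.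
rewrite /down (sum_covers_up _ (N := N) (remove_box_part ps hj)); last first.
  exact: leq_ltn_trans (size_remove_box (removable_size ps hj)) hN.
by rewrite big_mkcond; apply: eq_bigr => i _; case: ifP.
Qed.

Lemma up_down_termC s i j : is_part s -> i != j ->
  up_down_term s i j = down_up_term s i j.
Proof.
move=> ps ne; rewrite /up_down_term /down_up_term -addable_removableC //.
case: ifP => // /andP[hi hij]; rewrite remove_add_boxC // !Bcoef_add_box.
have hj : removable s j by move: (addable_removableC ps ne); rewrite hi hij => /esym/andP[].
by rewrite remove_box_nth // (negbTE ne) subn0.
Qed.

Lemma up_down_term_diag s i : is_part s ->
  up_down_term s i i = addable_weight z z' s i * g s.
Proof.
move=> ps; rewrite /up_down_term /addable_weight; case hi: (addable s i); last by rewrite mul0r.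
by have [-> ->] := remove_add_box ps hi; rewrite Bcoef_add_box.
Qed.

Lemma down_up_term_diag s j : is_part s ->
  down_up_term s j j = removable_weight z z' s j * g s.
Proof.
move=> ps; rewrite /down_up_term /removable_weight; case hj: (removable s j); last by rewrite mul0r.
by have [-> ->] := add_remove_box ps hj; rewrite Bcoef_remove_box.
Qed.

Lemma down_p1mul_commutator s : is_part s ->
  down (p1mul g) s - p1mul (down g) s = (2 * (psize s)%:R + complex.Re (z * z')) * g s.
Proof.
move=> ps; have hN : (size s < (size s).+1)%N by [].
rewrite (down_p1mul_sum ps hN) (p1mul_down_sum ps hN) -sumrB.
under eq_bigr => i _.
  rewrite (bigD1 i) //= [X in _ - X](bigD1 i) //=.
  rewrite (eq_bigr (fun j : 'I__ => down_up_term s i j)) => [|j ji]; last first.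
    by apply: up_down_termC; rewrite // eq_sym.
  rewrite opprD addrACA subrr addr0 up_down_term_diag // down_up_term_diag //.
  over.
by rewrite -(sum_corner_weights z z' ps hN) mulrBl !mulr_suml -sumrB.
Qed.

End DownUp.

Lemma sumr_neq0_witness (R : rcfType) (T : eqType) (s : seq T) (P : pred T) (F : T -> R) :
  \sum_(x <- s | P x) F x != 0 -> exists2 x, x \in s & P x && (F x != 0).
Proof.
move=> sum_neq0; apply/hasP; apply: contraNT sum_neq0 => /hasPn F0.
by rewrite big1_seq // => x /andP[px xs]; move: (F0 x xs); rewrite px negbK => /eqP.
Qed.

Lemma big_seq_delta (R : rcfType) (T : eqType) (s : seq T) (P : pred T) (F : T -> R) a :
  uniq s -> \sum_(x <- s | P x) F x * (x == a)%:R = if (a \in s) && P a then F a else 0.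
Proof.
move=> us; rewrite big_mkcond /=; case: (boolP (a \in s)) => ha /=.
  rewrite (bigD1_seq a) //= eqxx mulr1 big1 ?addr0 //.
  by move=> x /negbTE xa; rewrite xa mulr0; case: ifP.
rewrite big1_seq // => x /= xs; have /negbTE -> : x != a by apply: contraNneq ha => <-.
by rewrite mulr0; case: ifP.
Qed.

Section LambdaClosure.
Variables (R : rcfType) (z z' : R[i]).
Implicit Type f : seq nat -> R.

Lemma inLam_schur mu : is_part mu -> inLam (schur R mu).
Proof.
move=> pmu; split=> [s /negbTE ps|].
  by rewrite /schur; case: eqP => // smu; rewrite smu pmu in ps.
by exists [:: mu] => s; rewrite /schur mem_seq1 pnatr_eq0 eqb0 negbK.
Qed.

Lemma inLam_p1mul f : inLam f -> inLam (p1mul f).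
Proof.
case=> _ [S fS]; split=> [s ps|].
  by rewrite /p1mul big1 // => m /covers_part[_ ps']; rewrite ps' in ps.
exists (flatten [seq add_cands m | m <- S]) => nu /sumr_neq0_witness[m _ /andP[hc fm]].
by apply/flatten_mapP; exists m; [exact: fS | exact: covers_add_cands].
Qed.

Lemma inLam_down f : inLam f -> inLam (down z z' f).
Proof.
case=> _ [S fS]; split=> [s ps|].
  by rewrite /down big1 // => m /covers_part[ps' _]; rewrite ps' in ps.
exists (flatten [seq rm_cands m | m <- S]) => nu /sumr_neq0_witness[m _ /andP[hc Bfm]].
have fm : f m != 0 by apply: contraNneq Bfm => ->; rewrite mulr0.
by apply/flatten_mapP; exists m; [exact: fS | exact: covers_rm_cands].
Qed.

Lemma inLam_Bop f : inLam f -> inLam (Bop z z' f).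
Proof.
move=> hf; have [f0 [S fS]] := hf; have [h0 [S' hS']] := inLam_p1mul (inLam_down hf).
split=> [s ps|]; first by rewrite BopE f0 // h0 // mulr0 subr0.
exists (S ++ S') => nu; rewrite BopE mem_cat; case: (eqVneq (f nu) 0) => [->|/fS -> //].
by rewrite mulr0 subr0 => /hS' ->; rewrite orbT.
Qed.

End LambdaClosure.

Section Intertwining.
Variables (R : rcfType) (z z' : R[i]).
Implicit Type f : seq nat -> R.

Local Notation Z := (complex.Re (z * z')).
Local Notation D := (down z z').

Lemma downB f h s : D (fun t => f t - h t) s = D f s - D h s.
Proof. by rewrite /down -sumrB; apply: eq_bigr => m _; rewrite mulrBr. Qed.

Lemma Bop_p1m1 f nu : Bop z z' (p1m1 f) nu = p1m1 (Bop z z' f) nu.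
Proof.
rewrite /p1m1 !BopE /p1mul.
under eq_bigr => m /covers_part[pm _].
  rewrite downB -[D (p1mul f) m](subrK (p1mul (D f) m)) down_p1mul_commutator //.
  over.
under [X in _ = X - _]eq_bigr => m _ do rewrite BopE.
have shift : \sum_(m <- rm_cands nu | covers m nu) (2 * (psize m)%:R + Z) * f m
    = \sum_(m <- rm_cands nu | covers m nu)
        (Bdiag z z' (psize nu) * f m - Bdiag z z' (psize m) * f m).
  by apply: eq_bigr => m hc; rewrite (covers_psize hc) -mulrBl BdiagS.
by rewrite !sumrB big_split /= shift sumrB -mulr_sumr; ring.
Qed.

Lemma down_schur mu nu : D (schur R mu) nu = if covers nu mu then Bcoef z z' mu nu else 0.
Proof.
rewrite /down /schur big_seq_delta ?undup_uniq //.
by case hc: (covers nu mu); rewrite ?andbF // covers_add_cands.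
Qed.

Lemma Bop_schur_sub mu nu :
  Bop z z' (schur R mu) nu - Bcirc_image z z' mu nu = p1m1 (D (schur R mu)) nu.
Proof.
rewrite /Bcirc_image.
have -> : \sum_(m <- rm_cands mu | covers m mu) Bcoef z z' mu m * schur R m nu
    = D (schur R mu) nu.
  rewrite down_schur /schur (eq_bigr (fun m => Bcoef z z' mu m * (m == nu)%:R)) => [|m _].
    rewrite big_seq_delta ?undup_uniq //.
    by case hc: (covers nu mu); rewrite ?andbF ?covers_rm_cands.
  by rewrite eq_sym.
by rewrite /p1m1 BopE /Bdiag /schur; case: (eqVneq nu mu) => [->|_]; rewrite ?mulr0; ring.
Qed.

End Intertwining.

Theorem proposition5p5 (R : rcfType) (z z' : R[i]) (Hzz : admissible z z') :
  (forall g : seq nat -> R, inLam g -> inIdeal (Bop z z' (p1m1 g))) /\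
  (forall mu : seq nat, is_part mu ->
     inIdeal (fun nu => Bop z z' (schur R mu) nu - Bcirc_image z z' mu nu)).
Proof.
(* [Hzz] only makes the coefficients real; [Bcoef] takes real parts anyway, and
   the identities above hold for all [z], [z']. *)
split=> [g hg | mu pmu].
  by exists (Bop z z' g); split; [exact: inLam_Bop | exact: Bop_p1m1].
exists (down z z' (schur R mu)); split; first exact/inLam_down/inLam_schur.
exact: Bop_schur_sub.
Qed.
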